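(* Let $\alpha\in(\pi/8,3\pi/8)$ with $\alpha/\pi\notin\mathbb{Q}$, $\beta=\alpha-\pi/2$, $\rho=0.01$, $A_1=\rho R(\alpha)$, $A_2=\rho R(\beta)$ where $R(\theta)=\begin{bmatrix}\cos\theta&-\sin\theta\\ \sin\theta&\cos\theta\end{bmatrix}$, and $c(x)=x_1^2+2x_2^2$ for $x=[x_1,x_2]^\top\in\mathbb{R}^2$. Then the optimal value function $J^\star$ of $\{A_1,A_2\}$ with cost $c$ is non-differentiable on a dense subset of $\mathbb{R}^2$.
   Context: For the switched linear system $\xi(t+1)=A_{\sigma(t)}\xi(t)$ with switching signal $\sigma:\mathbb{N}\to\{1,2\}$, $\xi(t,x,\sigma)$ denotes the solution with $\xi(0)=x$, and $J^\star(x)=\inf_\sigma\sum_{t=0}^\infty c(\xi(t,x,\sigma))$. *)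

From HB Require Import structures.
From mathcomp Require Import all_boot all_order all_algebra.
From mathcomp Require Import all_classical all_reals all_analysis.
Set Implicit Arguments. Unset Strict Implicit. Unset Printing Implicit Defensive.
Import Order.TTheory GRing.Theory Num.Theory.
Import numFieldNormedType.Exports.
Local Open Scope classical_set_scope.
Local Open Scope ring_scope.

Definition rotmx {R : realType} (th : R) : 'M[R]_2 :=
  \matrix_(i < 2, j < 2)
    (if i == j then cos th
     else if (nat_of_ord i == 0)%N then - sin th else sin th).

Fixpoint traj {R : realType} {I : Type} (A : I -> 'M[R]_2)
  (sigma : nat -> I) (x : 'cV[R]_2) (t : nat) : 'cV[R]_2 :=
  match t with
  | 0 => x
  | t'.+1 => A (sigma t') *m traj A sigma x t'
  end.

Definition total_cost {R : realType} {I : Type} (A : I -> 'M[R]_2)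
  (c : 'cV[R]_2 -> R) (x : 'cV[R]_2) (sigma : nat -> I) : \bar R :=
  (\sum_(0 <= t <oo) (c (traj A sigma x t))%:E)%E.

(* Optimal value function J*(x) = inf_sigma sum_t c(xi(t,x,sigma)),
   taken as an extended real infimum and coerced to R (it is finite
   in the situation of the theorem). *)
Definition Jstar {R : realType} {I : Type} (A : I -> 'M[R]_2)
  (c : 'cV[R]_2 -> R) (x : 'cV[R]_2) : R :=
  fine (ereal_inf [set total_cost A c x sigma | sigma in [set: nat -> I]]).

From HB Require Import structures.
From mathcomp Require Import all_boot all_order all_algebra.
From mathcomp Require Import all_classical all_reals all_analysis.
From mathcomp Require Import ring lra.
Set Implicit Arguments. Unset Strict Implicit. Unset Printing Implicit Defensive.
Import Order.TTheory GRing.Theory Num.Theory.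
Import numFieldNormedType.Exports.
Local Open Scope classical_set_scope.
Local Open Scope ring_scope.

(* Since A_2 = A_1 R(-pi/2) and rotations commute, every trajectory is
   R(-k pi/2) y(t), where y(t) = rho^t R(t alpha) x is the trajectory of the
   constant signal and k is the number of uses of A_2 before time t.  A quarter
   turn swaps the weights of c, and the parity of k can be chosen freely at every
   t >= 1, so J*(x) = c(x) + sum_(t >= 1) min(c(y(t)), c'(y(t))) with
   c'(a, b) = b^2 + 2 a^2.  Each summand is a minimum of two quadratic forms: its
   second differences are at most a geometric multiple of h^2, and where y(t)
   lies on the diagonal {a = b} it has a concave kink of order |h| in the
   direction R(pi/2) x.  Hence J* is not differentiable there.  These points are
   the polar points of angle pi/4 - t alpha + m pi, which are dense by Kronecker's
   theorem since alpha/pi is irrational. *)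

Section Kronecker.
Variable R : archiRealFieldType.

Definition frac (x : R) : R := x - (Num.floor x)%:~R.

Lemma frac_itv x : 0 <= frac x < 1.
Proof.
have := floor_le x; have := floorD1_gt x; rewrite intrD /frac => ? ?.
by apply/andP; split; lra.
Qed.

Lemma truncn_eq_dist (u v : R) : 0 <= u -> 0 <= v ->
  Num.truncn u = Num.truncn v -> `|u - v| < 1.
Proof.
move=> /truncn_itv/andP[u1 u2] /truncn_itv/andP[v1 v2] uv.
rewrite uv in u1 u2; rewrite -[_.+1]addn1 natrD in u2 v2.
by rewrite ltr_norml; apply/andP; split; lra.
Qed.

Lemma frac_pigeonhole (a d : R) : 0 < d ->
  exists i j : nat, (i < j)%N /\ `|frac (j%:R * a) - frac (i%:R * a)| < d.
Proof.
move=> d_gt0; set N := (Num.truncn d^-1).+1.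
have N_gt0 : 0 < N%:R :> R by rewrite ltr0n.
have invN_lt : N%:R^-1 < d.
  by rewrite -[d]invrK ltf_pV2 ?posrE ?invr_gt0 // truncnS_gt.
have bin_ge0 i : 0 <= frac (i%:R * a) * N%:R.
  by rewrite mulr_ge0 ?ler0n //; case/andP: (frac_itv (i%:R * a)).
pose bin (i : 'I_N.+1) : 'I_N := inord (Num.truncn (frac (i%:R * a) * N%:R)).
have binE i : bin i = Num.truncn (frac (i%:R * a) * N%:R) :> nat.
  rewrite inordK // truncn_lt_nat // gtr_pMl //.
  by case/andP: (frac_itv (i%:R * a)).
have /injectivePn [i [j ij bin_ij]] : ~~ injectiveb bin.
  by apply/injectiveP => /leq_card; rewrite !card_ord ltnn.
have close : `|frac (i%:R * a) - frac (j%:R * a)| < d.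
  have := truncn_eq_dist (bin_ge0 i) (bin_ge0 j).
  rewrite -!binE bin_ij => /(_ erefl).
  rewrite -mulrBl normrM (gtr0_norm N_gt0) -ltr_pdivlMr // mul1r.
  by move/lt_trans; apply.
case: (ltngtP i j) => [lt_ij|lt_ji|/val_inj eq_ij]; last by rewrite eq_ij eqxx in ij.
- by exists i, j; rewrite distrC.
- by exists j, i.
Qed.

Lemma kronecker (a : R) :
    (forall (n : nat) (m : int), (0 < n)%N -> n%:R * a != m%:~R) ->
  forall g d : R, 0 < d ->
  exists t : nat, exists m : int, (0 < t)%N /\ `|t%:R * a - m%:~R - g| < d.
Proof.
move=> irr g d d_gt0.
have [n [M [n_gt0 [del_neq0 del_lt]]]] : exists n : nat, exists M : int,
    [/\ (0 < n)%N, n%:R * a - M%:~R != 0 & `|n%:R * a - M%:~R| < Num.min d 1].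
  have min_gt0 : 0 < Num.min d 1 by rewrite lt_min d_gt0 ltr01.
  have [i [j [lt_ij close]]] := frac_pigeonhole a min_gt0.
  exists (j - i)%N, (Num.floor (j%:R * a) - Num.floor (i%:R * a)).
  have E : (j - i)%N%:R * a - (Num.floor (j%:R * a) - Num.floor (i%:R * a))%:~R
      = frac (j%:R * a) - frac (i%:R * a).
    by rewrite /frac natrB ?(ltnW lt_ij) // intrB; ring.
  have n_gt0 : (0 < j - i)%N by rewrite subn_gt0.
  split => //; first by rewrite subr_eq0; apply: irr.
  by rewrite E.
set del := n%:R * a - M%:~R in del_neq0 del_lt *.
have [del_lt1 del_ltd] : `|del| < 1 /\ `|del| < d.
  by move: del_lt; rewrite lt_min => /andP[].
(* Only positive multiples of [del] are available, so move [g] by an integer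
   to the side of 0 towards which [del] points. *)
have [p ge_p] : exists p : int, 1 <= (g + p%:~R) / del.
  have /andP[fg0 fg1] := frac_itv g; rewrite /frac in fg0 fg1.
  move: del_lt1; rewrite ltr_norml => /andP[del_gtN1 del_lt1].
  have [del_gt0 | del_lt0] := ltrP 0 del.
    exists (- Num.floor g + 1); rewrite ler_pdivlMr // mul1r intrD intrN.
    lra.
  have {}del_lt0 : del < 0 by rewrite lt_neqAle del_neq0.
  exists (- Num.floor g - 2); rewrite ler_ndivlMr // mul1r intrB intrN.
  lra.
set k := Num.truncn ((g + p%:~R) / del).
have /andP[k_le k_gt] := truncn_itv (le_trans ler01 ge_p).
exists (k * n)%N, (k%:Z * M + p); split.
  by rewrite muln_gt0 n_gt0 andbT truncn_gt0.
have -> : (k * n)%N%:R * a - (k%:Z * M + p)%:~R - g = (k%:R - (g + p%:~R) / del) * del.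
  by rewrite natrM intrD intrM mulrBl divfK // /del pmulrn; ring.
rewrite normrM; apply: le_lt_trans del_ltd.
rewrite -[X in _ <= X]mul1r ler_wpM2r // ler_norml.
by rewrite -[_.+1]addn1 natrD in k_gt; apply/andP; split; lra.
Qed.

End Kronecker.

Lemma alternatingz (U : zmodType) (V : pzRingType) (f : U -> V) (T : U) :
  alternating f T -> forall (m : int) a, f (a + T *~ m) = (- 1) ^+ `|m|%N * f a.
Proof.
move=> fT [n|n] a; first exact: alternatingn.
have := alternatingn fT n.+1 (a + T *~ Negz n).
rewrite NegzE mulrNz subrK /= => ->.
by rewrite mulrA -expr2 sqrr_sign mul1r.
Qed.

Lemma sin_piquarter (R : realType) : sin (pi / 4) = cos (pi / 4) :> R.
Proof.
by rewrite -cosBpihalf (_ : pi / 4 - pi / 2 = - (pi / 4)) ?cosN //; field.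
Qed.

Lemma cos_piquarter_gt0 (R : realType) : 0 < cos (pi / 4) :> R.
Proof. by apply: cos_gt0_pihalf; have pi_gt0 := @pi_gt0 R; apply/andP; split; lra. Qed.

Section SecondDifference.
Variables (R : realType) (V : normedModType R).

Definition diff2 (f : V -> R) (x z : V) (h : R) :=
  f (x + h *: z) + f (x - h *: z) - 2 * f x.

Lemma diff2_sum I (r : seq I) (F : I -> V -> R) x z h :
  diff2 (fun y => \sum_(i <- r) F i y) x z h = \sum_(i <- r) diff2 (F i) x z h.
Proof. by rewrite /diff2 sumrB big_split mulr_sumr. Qed.

Lemma diff2_kink_not_differentiable (f : V -> R) (x z : V) (K k : R) : 0 < k ->
  (forall h, diff2 f x z h <= K * h ^+ 2 - k * `|h|) -> ~ differentiable f x.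
Proof.
move=> k_gt0 kink f_diff.
have quot_cvg0 : (fun h : R => h^-1 * diff2 f x z h) @ 0^' --> 0.
  have -> : (fun h : R => h^-1 * diff2 f x z h) = (fun h =>
      h^-1 *: ((f \o shift x) (h *: z) - f x) + h^-1 *: ((f \o shift x) (h *: - z) - f x)).
    apply/funext => h; rewrite /diff2 /= scalerN ![_ + x]addrC.
    by rewrite -!mulrDr; congr (_ * _); ring.
  have D_opp : 'D_z f x + 'D_(- z) f x = 0 by rewrite !deriveE // linearN addrN.
  rewrite -[X in _ --> X]D_opp.
  exact: cvgD (@diff_derivable _ _ _ f x z f_diff) (@diff_derivable _ _ _ f x (- z) f_diff).
have k2_gt0 : 0 < k / 2 by rewrite divr_gt0.
near (0 : R)^' => h.
have h_neq0 : h != 0 by near: h; exact: nbhs_dnbhs_neq.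
have quot_small : `|h^-1 * diff2 f x z h| < k / 2 by near: h; exact: cvgr0_norm_lt.
have h_small : `|h| * (`|K| + 1) < k / 2.
  rewrite -ltr_pdivlMr ?ltr_pwDr //; near: h.
  by apply: dnbhs0_lt; rewrite divr_gt0 // ltr_pwDr.
have h_gt0 : 0 < `|h| by rewrite normr_gt0.
have S_small : `|diff2 f x z h| < k / 2 * `|h|.
  by move: quot_small; rewrite normrM normfV -ltr_pdivlMl ?invr_gt0 // invrK mulrC.
have K_h2 : K * h ^+ 2 <= `|K| * `|h| * `|h|.
  by rewrite -mulrA -expr2 -normrX -normrM ler_norm.
have K_h : `|K| * `|h| * `|h| <= k / 2 * `|h|.
  by rewrite ler_wpM2r ?ltW //; move: h_small; rewrite mulrDr mulr1 mulrC; lra.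
have := kink h; have := ler_norm (- diff2 f x z h); rewrite normrN; lra.
Unshelve. all: by end_near.
Qed.

End SecondDifference.

Section MinQuadratic.
Variable R : realFieldType.

Definition minq (a b : R) := Num.min (a ^+ 2 + 2 * b ^+ 2) (b ^+ 2 + 2 * a ^+ 2).

Lemma minq_diff2 a b c d h :
  minq (a + h * c) (b + h * d) + minq (a - h * c) (b - h * d) - 2 * minq a b
  <= 4 * h ^+ 2 * (c ^+ 2 + d ^+ 2).
Proof.
have hc2 := sqr_ge0 (h * c); have hd2 := sqr_ge0 (h * d).
have min_le (u v : R) :
    minq u v <= u ^+ 2 + 2 * v ^+ 2 /\ minq u v <= v ^+ 2 + 2 * u ^+ 2.
  by rewrite /minq !ge_min !lexx orbT.
have [p1 p2] := min_le (a + h * c) (b + h * d).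
have [m1 m2] := min_le (a - h * c) (b - h * d).
have E1 : (a + h * c) ^+ 2 + 2 * (b + h * d) ^+ 2 + ((a - h * c) ^+ 2 + 2 * (b - h * d) ^+ 2)
    = 2 * (a ^+ 2 + 2 * b ^+ 2) + 2 * (h * c) ^+ 2 + 4 * (h * d) ^+ 2 by ring.
have E2 : (b + h * d) ^+ 2 + 2 * (a + h * c) ^+ 2 + ((b - h * d) ^+ 2 + 2 * (a - h * c) ^+ 2)
    = 2 * (b ^+ 2 + 2 * a ^+ 2) + 4 * (h * c) ^+ 2 + 2 * (h * d) ^+ 2 by ring.
have E3 : 4 * h ^+ 2 * (c ^+ 2 + d ^+ 2) = 4 * (h * c) ^+ 2 + 4 * (h * d) ^+ 2 by ring.
rewrite E3 {3}/minq.
by case: (leP (a ^+ 2 + 2 * b ^+ 2) (b ^+ 2 + 2 * a ^+ 2)) => _; lra.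
Qed.

Lemma minq_diff2_diag s h :
  minq (s - h * s) (s + h * s) + minq (s + h * s) (s - h * s) - 2 * minq s s
  = 6 * h ^+ 2 * s ^+ 2 - 4 * `|h| * s ^+ 2.
Proof.
have min_pm (X Y : R) : Num.min (X + Y) (X - Y) = X - `|Y|.
  case: (lerP 0 Y) => Y0; first by rewrite ger0_norm // (min_idPr _) //; lra.
  by rewrite ltr0_norm // opprK (min_idPl _) //; lra.
have E : minq (s - h * s) (s + h * s) = 3 * s ^+ 2 + 3 * (h * s) ^+ 2 - 2 * `|h| * s ^+ 2.
  rewrite /minq.
  have -> : (s - h * s) ^+ 2 + 2 * (s + h * s) ^+ 2
      = 3 * s ^+ 2 + 3 * (h * s) ^+ 2 + 2 * h * s ^+ 2 by ring.
  have -> : (s + h * s) ^+ 2 + 2 * (s - h * s) ^+ 2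
      = 3 * s ^+ 2 + 3 * (h * s) ^+ 2 - 2 * h * s ^+ 2 by ring.
  by rewrite min_pm normrM (ger0_norm (sqr_ge0 s)) normrM normr_nat.
rewrite E [minq (s + _) _]/minq minC -/(minq (s - h * s) (s + h * s)) E.
by rewrite /minq minxx; ring.
Qed.

End MinQuadratic.

Section PlaneVectors.
Variable R : realType.
Implicit Types (c h r th : R) (v w : 'cV[R]_2).

Lemma ord2P (i : 'I_2) : i = 0 \/ i = 1.
Proof. by case: i => [[|[|//]] ?]; [left | right]; apply: val_inj. Qed.

Lemma mulmx2E m n (M : 'M[R]_(m, 2)) (N : 'M[R]_(2, n)) i j :
  (M *m N) i j = M i 0 * N 0 j + M i 1 * N 1 j.
Proof.
rewrite mxE !big_ord_recl big_ord0 addr0.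
by congr (M i _ * N _ j + M i _ * N _ j); apply: val_inj.
Qed.

Lemma eq_cV2 v w : v 0 0 = w 0 0 -> v 1 0 = w 1 0 -> v = w.
Proof.
move=> e0 e1; apply/matrixP => i j; rewrite (ord1 j).
by case: (ord2P i) => ->.
Qed.

Lemma addZ_cVE v w h i : (v + h *: w) i 0 = v i 0 + h * w i 0.
Proof. by rewrite !mxE. Qed.

Lemma subZ_cVE v w h i : (v - h *: w) i 0 = v i 0 - h * w i 0.
Proof. by rewrite !mxE. Qed.

Lemma ball_cV2 v w (e : R) :
  0 < e -> `|v 0 0 - w 0 0| < e -> `|v 1 0 - w 1 0| < e -> ball v e w.
Proof.
move=> e_gt0 e0 e1; split => // i j; rewrite (ord1 j) -ball_normE /ball_ /=.
by case: (ord2P i) => ->.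
Qed.

Definition sqnorm v := v 0 0 ^+ 2 + v 1 0 ^+ 2.

Lemma sqnorm_ge0 v : 0 <= sqnorm v.
Proof. by rewrite addr_ge0 ?sqr_ge0. Qed.

Definition polar r th : 'cV[R]_2 :=
  \col_i (if (nat_of_ord i == 0)%N then r * cos th else r * sin th).

Lemma scale_polar c r th : c *: polar r th = polar (c * r) th.
Proof. by apply/matrixP => i j; rewrite !mxE; case: ifP => _; rewrite mulrA. Qed.

Lemma polarP v : exists r th, 0 <= r /\ v = polar r th.
Proof.
set r := Num.sqrt (sqnorm v); have r_ge0 : 0 <= r := sqrtr_ge0 _.
have r2 : r ^+ 2 = sqnorm v by rewrite sqr_sqrtr // addr_ge0 ?sqr_ge0.
have [r0 | r_gt0] := eqVneq r 0.
  exists 0, 0; split => //.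
  have : sqnorm v = 0 by rewrite -r2 r0 expr0n.
  rewrite /sqnorm => /eqP; rewrite paddr_eq0 ?sqr_ge0 // !sqrf_eq0 => /andP[/eqP v0 /eqP v1].
  by apply: eq_cV2; rewrite !mxE /= mul0r.
have {}r_gt0 : 0 < r by rewrite lt_neqAle eq_sym r_gt0.
set ca := v 0 0 / r; set sa := v 1 0 / r.
have v0E : v 0 0 = r * ca by rewrite /ca mulrC divfK // gt_eqF.
have v1E : v 1 0 = r * sa by rewrite /sa mulrC divfK // gt_eqF.
clearbody ca sa.
have cs1 : ca ^+ 2 + sa ^+ 2 = 1.
  have r2_neq0 : r ^+ 2 != 0 by rewrite expf_neq0 // gt_eqF.
  apply: (mulfI r2_neq0).
  by rewrite mulr1 {2}r2 /sqnorm v0E v1E; ring.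
have ca_itv : -1 <= ca <= 1.
  have ca2 : ca ^+ 2 <= 1 by have := sqr_ge0 sa; lra.
  by apply/andP; split; nra.
have sin_acos_ca : sin (acos ca) = `|sa|.
  by rewrite sin_acos // -sqrtr_sqr; congr Num.sqrt; lra.
exists r, (if 0 <= sa then acos ca else - acos ca); split; first exact: ltW.
have cos_acos : cos (acos ca) = ca by rewrite acosK ?in_itv.
case: ifP => sa_ge0; apply: eq_cV2; rewrite !mxE /=.
- by rewrite cos_acos.
- by rewrite sin_acos_ca ger0_norm.
- by rewrite cosN cos_acos.
- by rewrite sinN sin_acos_ca ltr0_norm ?mulrN ?opprK // ltNge sa_ge0.
Qed.

Lemma dense_polar (Th : set R) :
    (forall g d, 0 < d -> exists2 th, Th th & `|th - g| < d) ->
  dense [set polar r th | r in [set r | 0 < r] & th in Th].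
Proof.
move=> Th_dense O [x Ox] O_open.
have [e e_gt0 ball_O] : exists2 e, 0 < e & ball x e `<=` O.
  by apply/nbhs_ballP; exact: O_open.
have [r0 [th0 [r0_ge0 xE]]] := polarP x.
have e2_gt0 : 0 < e / 2 by rewrite divr_gt0.
set r := r0 + e / 2.
have r_gt0 : 0 < r by rewrite ltr_wpDl.
have eps_gt0 : 0 < e / 2 / r by rewrite divr_gt0.
have close (u0 u : R) : `|u0| <= 1 -> `|u0 - u| < e / 2 / r -> `|r0 * u0 - r * u| < e.
  move=> u0_le1 uu.
  have -> : r0 * u0 - r * u = r * (u0 - u) - e / 2 * u0 by rewrite /r; ring.
  apply: le_lt_trans (ler_normB _ _) _.
  rewrite normrM (gtr0_norm r_gt0) normrM (gtr0_norm e2_gt0).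
  have : r * `|u0 - u| < e / 2 by rewrite -ltr_pdivlMl // mulrC.
  have : e / 2 * `|u0| <= e / 2 by rewrite ler_piMr // ltW.
  lra.
have [dl dl_gt0 near_th0] : exists2 dl, 0 < dl & forall th, `|th - th0| < dl ->
    `|cos th0 - cos th| < e / 2 / r /\ `|sin th0 - sin th| < e / 2 / r.
  have cos_near : \forall th \near th0, `|cos th0 - cos th| < e / 2 / r.
    by move: (@continuous_cos R th0) => /cvgr_dist_lt/(_ _ eps_gt0).
  have sin_near : \forall th \near th0, `|sin th0 - sin th| < e / 2 / r.
    by move: (@continuous_sin R th0) => /cvgr_dist_lt/(_ _ eps_gt0).
  have [dl dl_gt0 dl_near] := (nbhs_ballP _ _).1 (filterI cos_near sin_near).
  by exists dl => // th th_close; apply: dl_near; rewrite /ball /= distrC.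
have [th Th_th th_close] := Th_dense th0 dl dl_gt0.
have [cos_close sin_close] := near_th0 th th_close.
exists (polar r th); split; last by exists r => //; exists th.
apply: ball_O; apply: ball_cV2 => //; rewrite xE !mxE /=; apply: close => //.
  by rewrite ler_norml cos_geN1 cos_le1.
by rewrite ler_norml sin_geN1 sin_le1.
Qed.

End PlaneVectors.

Section PlaneRotations.
Variable R : realType.
Implicit Types (a b c r th : R) (v : 'cV[R]_2).

Lemma rotmx_mul0 th v : (rotmx th *m v) 0 0 = cos th * v 0 0 - sin th * v 1 0.
Proof. by rewrite mulmx2E !mxE /= mulNr. Qed.

Lemma rotmx_mul1 th v : (rotmx th *m v) 1 0 = sin th * v 0 0 + cos th * v 1 0.
Proof. by rewrite mulmx2E !mxE. Qed.

Lemma rotmxD a b : rotmx a *m rotmx b = rotmx (a + b).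
Proof.
apply/matrixP => i j; rewrite mulmx2E !mxE cosD sinD.
by case: i => [[|[|//]] ?]; case: j => [[|[|//]] ?] /=; ring.
Qed.

Lemma rotmx0 : rotmx 0 = 1%:M :> 'M[R]_2.
Proof.
by apply/matrixP => i j; rewrite !mxE cos0 sin0 oppr0 if_same; case: (i == j).
Qed.

Lemma rotmx_polar a r th : rotmx a *m polar r th = polar r (a + th).
Proof.
apply/matrixP => i j; rewrite mulmx2E !mxE cosD sinD.
by case: i => [[|[|//]] ?] /=; ring.
Qed.

Lemma sqnorm_rot c th v : sqnorm (c *: (rotmx th *m v)) = c ^+ 2 * sqnorm v.
Proof.
rewrite /sqnorm scalemxAl !mulmx2E !mxE /=.
have := cos2Dsin2 th; move: (cos th) (sin th) => C S CS.
transitivity (c ^+ 2 * (C ^+ 2 + S ^+ 2) * (v 0 0 ^+ 2 + v 1 0 ^+ 2)); first ring.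
by rewrite CS mulr1.
Qed.

Definition cost v := v 0 0 ^+ 2 + 2 * v 1 0 ^+ 2.

Definition cost_swap v := v 1 0 ^+ 2 + 2 * v 0 0 ^+ 2.

Lemma cost_le_sqnorm v : cost v <= 2 * sqnorm v.
Proof. by rewrite /cost /sqnorm; have := sqr_ge0 (v 0 0); lra. Qed.

Lemma cost_ge0 v : 0 <= cost v.
Proof. by rewrite /cost; have := sqr_ge0 (v 0 0); have := sqr_ge0 (v 1 0); lra. Qed.

Lemma cost_swap_ge0 v : 0 <= cost_swap v.
Proof. by rewrite /cost_swap; have := sqr_ge0 (v 0 0); have := sqr_ge0 (v 1 0); lra. Qed.

Lemma cost_rotBpihalf c th v :
  cost (c *: (rotmx (th - pi / 2) *m v)) = cost_swap (c *: (rotmx th *m v)).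
Proof.
by rewrite /cost /cost_swap !scalemxAl !mulmx2E !mxE /= cosBpihalf sinBpihalf; ring.
Qed.

Lemma cost_swap_rotBpihalf c th v :
  cost_swap (c *: (rotmx (th - pi / 2) *m v)) = cost (c *: (rotmx th *m v)).
Proof.
by rewrite /cost /cost_swap !scalemxAl !mulmx2E !mxE /= cosBpihalf sinBpihalf; ring.
Qed.

Lemma cost_rotB_npihalf k c th v :
  cost (c *: (rotmx (th - k%:R * (pi / 2)) *m v)) =
  if odd k then cost_swap (c *: (rotmx th *m v)) else cost (c *: (rotmx th *m v)).
Proof.
elim: k th => [|k IH] th; first by rewrite mul0r subr0.
rewrite (_ : th - k.+1%:R * (pi / 2) = th - pi / 2 - k%:R * (pi / 2)); last first.
  by rewrite -addn1 natrD; ring.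
rewrite IH /=; case: (odd k) => /=; [exact: cost_swap_rotBpihalf | exact: cost_rotBpihalf].
Qed.

Lemma min_cost_minq v : Num.min (cost v) (cost_swap v) = minq (v 0 0) (v 1 0).
Proof. by []. Qed.

End PlaneRotations.
Arguments cost {R}.

Section SwitchedRotations.
Variables (R : realType) (alpha rho : R).
Hypotheses (rho_gt0 : 0 < rho) (rho_lt1 : rho < 1).

Definition A (i : 'I_2) : 'M[R]_2 :=
  if (nat_of_ord i == 0)%N then rho *: rotmx alpha else rho *: rotmx (alpha - pi / 2).

Definition flow t (x : 'cV[R]_2) := rho ^+ t *: (rotmx (t%:R * alpha) *m x).

Definition nswitch (sigma : nat -> 'I_2) t :=
  (\sum_(0 <= s < t) (nat_of_ord (sigma s) != 0))%N.

Lemma traj_rot sigma x t : traj A sigma x t =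
  rho ^+ t *: (rotmx (t%:R * alpha - (nswitch sigma t)%:R * (pi / 2)) *m x).
Proof.
elim: t => [|t IH] /=.
  by rewrite /nswitch big_geq // !mul0r subr0 rotmx0 mul1mx scale1r.
have A_rot : A (sigma t) = rho *: rotmx (alpha - (nat_of_ord (sigma t) != 0)%N%:R * (pi / 2)).
  by rewrite /A; case: eqP => _ /=; rewrite ?mul0r ?subr0 ?mul1r.
rewrite IH A_rot -scalemxAl -scalemxAr scalerA -exprS mulmxA rotmxD /nswitch big_nat_recr //=.
by congr (_ *: (rotmx _ *m _)); rewrite natrD -natr1; ring.
Qed.

Lemma flow0 x : flow 0 x = x.
Proof. by rewrite /flow mul0r rotmx0 mul1mx scale1r. Qed.

Lemma cost_traj sigma x t :
  cost (traj A sigma x t) =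
  if odd (nswitch sigma t) then cost_swap (flow t x) else cost (flow t x).
Proof. by rewrite traj_rot cost_rotB_npihalf. Qed.

Definition stage_min t x :=
  if t is 0 then cost x else Num.min (cost (flow t x)) (cost_swap (flow t x)).

Lemma stage_min_le_cost sigma x t : stage_min t x <= cost (traj A sigma x t).
Proof.
case: t => [|t]; first by [].
by rewrite cost_traj /= ge_min; case: odd; rewrite lexx ?orbT.
Qed.

Lemma optimal_signal x : exists sigma, forall t, cost (traj A sigma x t) = stage_min t x.
Proof.
pose swapped t := (t != 0)%N && (cost_swap (flow t x) < cost (flow t x)).
pose sigma t : 'I_2 := if swapped t != swapped t.+1 then 1 else 0.
have parity t : odd (nswitch sigma t) = swapped t.
  elim: t => [|t IH]; first by rewrite /nswitch big_geq.
  rewrite /nswitch big_nat_recr //= oddD -/(nswitch _ _) IH /sigma.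
  by case: (swapped t); case: (swapped t.+1).
exists sigma => t; rewrite cost_traj parity /swapped; case: t => [|t] /=; first by rewrite flow0.
by case: ltP.
Qed.

Lemma sqnorm_flow t x : sqnorm (flow t x) = sqnorm x * (rho ^+ 2) ^+ t.
Proof. by rewrite sqnorm_rot -exprM mulnC exprM mulrC. Qed.

Lemma stage_min_ge0 t x : 0 <= stage_min t x.
Proof. by case: t => [|t] /=; rewrite ?le_min ?cost_ge0 ?cost_swap_ge0. Qed.

Lemma stage_min_le t x : stage_min t x <= 2 * sqnorm x * (rho ^+ 2) ^+ t.
Proof.
case: t => [|t] /=; first by rewrite expr0 mulr1 cost_le_sqnorm.
by rewrite ge_min -mulrA -sqnorm_flow cost_le_sqnorm.
Qed.

Lemma sum_geometric_le a N : 0 <= a ->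
  \sum_(0 <= t < N) a * (rho ^+ 2) ^+ t <= a / (1 - rho ^+ 2).
Proof.
move=> a_ge0; apply: (geometric_le_lim N a_ge0); first by rewrite exprn_gt0.
by rewrite ger0_norm ?sqr_ge0 // expr_lt1 // ltW.
Qed.

Definition stage_sum x N := \sum_(0 <= t < N) stage_min t x.

Lemma ereal_inf_total_cost x :
  ereal_inf [set total_cost A cost x sigma | sigma in [set: nat -> 'I_2]] =
  (\sum_(0 <= t <oo) (stage_min t x)%:E)%E.
Proof.
apply/eqP; rewrite eq_le; apply/andP; split.
  have [sigma opt] := optimal_signal x.
  apply: ge_ereal_inf; exists (total_cost A cost x sigma); first by exists sigma.
  by rewrite /total_cost; under eq_eseriesr do rewrite opt.
apply: le_ereal_inf_tmp => _ [sigma _ <-].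
by apply: lee_nneseries => [t _ _ | t _]; rewrite lee_fin ?stage_min_ge0 ?stage_min_le_cost.
Qed.

Lemma stage_sum_cvg x : stage_sum x @ \oo --> Jstar A cost x.
Proof.
have sum_cvg : cvgn (stage_sum x).
  apply: nondecreasing_is_cvgn.
    by apply: nondecreasing_series => t _ _; exact: stage_min_ge0.
  exists (2 * sqnorm x / (1 - rho ^+ 2)) => _ [N _ <-].
  apply: le_trans (sum_geometric_le N _); last by rewrite mulr_ge0 ?sqnorm_ge0.
  by apply: ler_sum => t _; exact: stage_min_le.
rewrite /Jstar ereal_inf_total_cost.
have -> : (\sum_(0 <= t <oo) (stage_min t x)%:E)%E = limn (EFin \o stage_sum x).
  by apply: congr_lim; apply/funext => N; rewrite /= /stage_sum sumEFin.
by rewrite EFin_lim //=.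
Qed.

Lemma flowDZ t x z h : flow t (x + h *: z) = flow t x + h *: flow t z.
Proof. by rewrite /flow mulmxDr scalerDr -!scalemxAr !scalerA [rho ^+ t * h]mulrC. Qed.

Lemma flowBZ t x z h : flow t (x - h *: z) = flow t x - h *: flow t z.
Proof. by rewrite -!scaleNr flowDZ. Qed.

Lemma flow_rot_pihalf t x : flow t (rotmx (pi / 2) *m x) = rotmx (pi / 2) *m flow t x.
Proof. by rewrite /flow -scalemxAr !mulmxA !rotmxD addrC. Qed.

Lemma stage_min_diff2 t x z h :
  diff2 (stage_min t) x z h <= 4 * sqnorm z * h ^+ 2 * (rho ^+ 2) ^+ t.
Proof.
case: t => [|t]; rewrite /diff2 /=.
  rewrite expr0 mulr1 /cost /sqnorm !addZ_cVE !subZ_cVE.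
  have := sqr_ge0 (h * z 0 0); move: (x 0 0) (x 1 0) (z 0 0) (z 1 0) => a b c d hc2.
  have -> : 4 * (c ^+ 2 + d ^+ 2) * h ^+ 2 = 4 * (h * c) ^+ 2 + 4 * (h * d) ^+ 2 by ring.
  have -> : (a + h * c) ^+ 2 + 2 * (b + h * d) ^+ 2 + ((a - h * c) ^+ 2 + 2 * (b - h * d) ^+ 2)
    - 2 * (a ^+ 2 + 2 * b ^+ 2) = 2 * (h * c) ^+ 2 + 4 * (h * d) ^+ 2 by ring.
  lra.
have -> : 4 * sqnorm z * h ^+ 2 * (rho ^+ 2) ^+ t.+1 = 4 * h ^+ 2 * sqnorm (flow t.+1 z).
  by rewrite sqnorm_flow; ring.
by rewrite flowDZ flowBZ !min_cost_minq !addZ_cVE !subZ_cVE minq_diff2.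
Qed.

Lemma stage_min_diff2_kink t x h : (0 < t)%N -> flow t x 0 0 = flow t x 1 0 ->
  diff2 (stage_min t) x (rotmx (pi / 2) *m x) h <=
  4 * sqnorm (rotmx (pi / 2) *m x) * h ^+ 2 * (rho ^+ 2) ^+ t - 4 * flow t x 0 0 ^+ 2 * `|h|.
Proof.
case: t => [//|t] _ diag.
have -> : 4 * sqnorm (rotmx (pi / 2) *m x) * h ^+ 2 * (rho ^+ 2) ^+ t.+1
    = 4 * h ^+ 2 * sqnorm (flow t.+1 (rotmx (pi / 2) *m x)) by rewrite sqnorm_flow; ring.
rewrite /diff2 /= flowDZ flowBZ !min_cost_minq flow_rot_pihalf /sqnorm.
rewrite !addZ_cVE !subZ_cVE rotmx_mul0 rotmx_mul1 cos_pihalf sin_pihalf -diag.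
set s := flow t.+1 x 0 0.
have -> : 0 * s - 1 * s = - s by ring.
have -> : 1 * s + 0 * s = s by ring.
rewrite mulrN opprK minq_diff2_diag.
have := sqr_ge0 (h * s); rewrite exprMn; lra.
Qed.

Lemma stage_sum_diff2_kink t0 x h N :
    (0 < t0)%N -> flow t0 x 0 0 = flow t0 x 1 0 -> (t0 < N)%N ->
  diff2 (stage_sum^~ N) x (rotmx (pi / 2) *m x) h <=
  4 * sqnorm (rotmx (pi / 2) *m x) / (1 - rho ^+ 2) * h ^+ 2 - 4 * flow t0 x 0 0 ^+ 2 * `|h|.
Proof.
move=> t0_gt0 diag t0_lt_N; set z := rotmx (pi / 2) *m x.
set P := 4 * sqnorm z * h ^+ 2.
have t0_in : t0 \in index_iota 0 N by rewrite mem_index_iota.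
have P_ge0 : 0 <= P by rewrite mulr_ge0 ?sqr_ge0 ?mulr_ge0 ?sqnorm_ge0.
have := sum_geometric_le N P_ge0.
rewrite /stage_sum diff2_sum !(bigD1_seq t0) ?iota_uniq //=.
have := stage_min_diff2_kink h t0_gt0 diag; rewrite -/z -/P.
have : \sum_(t <- index_iota 0 N | t != t0) diff2 (stage_min t) x z h
    <= \sum_(t <- index_iota 0 N | t != t0) P * (rho ^+ 2) ^+ t.
  by apply: ler_sum => t _; exact: stage_min_diff2.
rewrite [_ / _ * _]mulrAC -/P; lra.
Qed.

Lemma Jstar_diff2_kink t0 x h : (0 < t0)%N -> flow t0 x 0 0 = flow t0 x 1 0 ->
  diff2 (Jstar A cost) x (rotmx (pi / 2) *m x) h <=
  4 * sqnorm (rotmx (pi / 2) *m x) / (1 - rho ^+ 2) * h ^+ 2 - 4 * flow t0 x 0 0 ^+ 2 * `|h|.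
Proof.
move=> t0_gt0 diag; set z := rotmx (pi / 2) *m x.
have diff2_cvg : diff2 (stage_sum^~ N) x z h @[N --> \oo] --> diff2 (Jstar A cost) x z h.
  by apply: cvgB; [apply: cvgD | apply: cvgMr]; exact: stage_sum_cvg.
apply: (cvgr_to_le diff2_cvg); near=> N.
by apply: stage_sum_diff2_kink => //; near: N; exact: nbhs_infty_gt.
Unshelve. all: by end_near.
Qed.

Lemma Jstar_not_differentiable t x :
  (0 < t)%N -> flow t x 0 0 = flow t x 1 0 -> flow t x 0 0 != 0 ->
  ~ differentiable (Jstar A cost) x.
Proof.
move=> t_gt0 diag s_neq0.
apply: (diff2_kink_not_differentiable (k := 4 * flow t x 0 0 ^+ 2)).
  by rewrite mulr_gt0 // exprn_even_gt0.
by move=> h; exact: Jstar_diff2_kink.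
Qed.


Lemma flow_polar t r th : flow t (polar r th) = polar (rho ^+ t * r) (t%:R * alpha + th).
Proof. by rewrite /flow rotmx_polar scale_polar. Qed.

Lemma Jstar_not_differentiable_polar t (m : int) r : (0 < t)%N -> 0 < r ->
  ~ differentiable (Jstar A cost) (polar r (pi / 4 - t%:R * alpha + pi *~ m)).
Proof.
move=> t_gt0 r_gt0.
have angle : t%:R * alpha + (pi / 4 - t%:R * alpha + pi *~ m) = pi / 4 + pi *~ m by ring.
apply: (Jstar_not_differentiable t_gt0); rewrite flow_polar !mxE /= angle.
  by rewrite (alternatingz (@cosDpi R)) (alternatingz (@sinDpi R)) sin_piquarter.
rewrite (alternatingz (@cosDpi R)).
by rewrite !mulf_neq0 ?signr_eq0 ?gt_eqF ?exprn_gt0 ?cos_piquarter_gt0.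
Qed.

Theorem Jstar_not_differentiable_dense : ~ (exists q : rat, alpha / pi = ratr q) ->
  dense [set x | ~ differentiable (Jstar A cost) x].
Proof.
move=> irr; have pi_gt0 := @pi_gt0 R.
have angles_dense g d : 0 < d -> exists2 th,
    [set pi / 4 - t%:R * alpha + pi *~ m | t in [set t | (0 < t)%N] & m in [set: int]] th
    & `|th - g| < d.
  move=> d_gt0.
  have irr' n m : (0 < n)%N -> n%:R * (alpha / pi) != m%:~R.
    move=> n_gt0; apply/eqP => E; apply: irr; exists (m%:~R / n%:R).
    by rewrite fmorph_div rmorph_int rmorph_nat -E [n%:R * _]mulrC mulfK // pnatr_eq0 -lt0n.
  have [t [m [t_gt0 close]]] := kronecker irr' ((pi / 4 - g) / pi) (divr_gt0 d_gt0 pi_gt0).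
  exists (pi / 4 - t%:R * alpha + pi *~ m); first by exists t => //; exists m.
  have -> : pi / 4 - t%:R * alpha + pi *~ m - g
      = - (pi * (t%:R * (alpha / pi) - m%:~R - (pi / 4 - g) / pi)).
    by rewrite -mulrzr; move: (@pi R) pi_gt0 => p p_gt0; field; rewrite gt_eqF.
  by rewrite normrN normrM gtr0_norm // mulrC -ltr_pdivlMr.
move=> O O_neq0 O_open.
have [x [Ox [r r_gt0 [th [t t_gt0 [m _ <-]] xE]]]] := dense_polar angles_dense O_neq0 O_open.
by exists x; split; rewrite // -xE; exact: Jstar_not_differentiable_polar.
Qed.

End SwitchedRotations.

Theorem corollary3 (R : realType) (alpha : R) :
  pi / 8 < alpha < 3 * pi / 8 ->
  ~ (exists q : rat, alpha / pi = ratr q) ->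
  let beta := alpha - pi / 2 in
  let rho : R := 100%:R^-1 in
  let A : 'I_2 -> 'M[R]_2 :=
    fun i => if (nat_of_ord i == 0)%N then rho *: rotmx alpha else rho *: rotmx beta in
  let c : 'cV[R]_2 -> R := fun x => x 0 0 ^+ 2 + 2 * x 1 0 ^+ 2 in
  dense [set x : 'cV[R]_2 | ~ differentiable (Jstar A c) x].
Proof.
move=> _ irr beta rho A c.
have rho_gt0 : 0 < rho by rewrite invr_gt0 ltr0n.
have rho_lt1 : rho < 1 by rewrite invf_lt1 ?ltr0n // ltr1n.
exact: (Jstar_not_differentiable_dense rho_gt0 rho_lt1 irr).
Qed.
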